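(* Let $\mathcal{C}=\mathcal{C}_{\mathcal{Q}}$ be a harmonic curve in $\mathbb{P}^2$. Then there is a polarity $P\mapsto p$ of $\mathbb{P}^2$ such that: (i) for every point $P$, $P\in\mathcal{C}$ if and only if $P\in p$; (ii) for every point $P\notin\mathcal{C}$ (so that $P\notin p$), the harmonic reflection $\rho_{P,p}$ maps $\mathcal{C}$ onto itself. Moreover, for each point $Z\in\mathcal{C}$ its polar line $z$ is the line of the tangent bundle $\mathcal{C}_{\mathcal{Q}}^*$ through $Z$.
   Context: $\mathbb{P}^2$ denotes the projective plane over a field $F$ with $\operatorname{char}F\neq 2$. For distinct points $X,Y$, $X\vee Y$ is the line through them; for distinct lines $\ell,m$, $\ell\wedge m$ is their common point. Maps act on the right. Four distinct collinear points $A,C,B,D$ form a harmonic set with conjugate pairs $\{A,B\}$ and $\{C,D\}$ if the cross-ratio $(A,B;C,D)=-1$. Four distinct concurrent lines form a harmonic pencil with given conjugate pairs if some (equivalently every) line not through their common point meets them in a harmonic set with the corresponding conjugate pairs. For a point $P$ and a line $m$ with $P\notin m$, the harmonic reflection $\rho_{P,m}$ of $\mathbb{P}^2$ fixes $P$ and every point of $m$ and sends every other point $X$ to the harmonic conjugate of $X$ with respect to $P$ and $(X\vee P)\wedge m$. A quadrangle $\mathcal{Q}$ with vertices $A,C,B,D$ (in cyclic order) consists of four points in general position (no three collinear) together with this cyclic order up to reversal; its sides are $A\vee C, C\vee B, B\vee D, D\vee A$, and its diagonal lines are $A\vee B$ and $C\vee D$. The harmonic curve $\mathcal{C}_{\mathcal{Q}}$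 is the set consisting of $A,C,B,D$ together with all points $Z\notin\{A,B,C,D\}$ such that $Z\vee A, Z\vee C, Z\vee B, Z\vee D$ are four distinct lines forming a harmonic pencil with conjugate pairs $\{Z\vee A,Z\vee B\}$ and $\{Z\vee C,Z\vee D\}$. The tangent line at a vertex $V$ is the harmonic conjugate, within the pencil at $V$, of the diagonal line through $V$ with respect to the two sides through $V$; let $a,c,b,d$ be the tangent lines at $A,C,B,D$. For four lines $l_1,\dots,l_4$ (no three concurrent) in cyclic order, their harmonic bundle consists of $l_1,\dots,l_4$ together with every other line $z$ such that $z\wedge l_1,\dots,z\wedge l_4$ are four distinct points forming a harmonic set with conjugate pairs $\{z\wedge l_1,z\wedge l_3\}$, $\{z\wedge l_2,z\wedge l_4\}$; the tangent bundle $\mathcal{C}_{\mathcal{Q}}^*$ is the harmonic bundle of $a,c,b,d$. A polarity of $\mathbb{P}^2$ is a bijection $P\mapsto p$ from points to lines such that $P\in q\iff Q\in p$ for all points $P,Q$ (lower case denotes the image of the same upper case letter); $p$ is the polar of $P$, and $P$ the pole of $p$. *)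

From HB Require Import structures.
From mathcomp Require Import all_boot all_order all_algebra.
Set Implicit Arguments. Unset Strict Implicit. Unset Printing Implicit Defensive.
Import Order.TTheory GRing.Theory Num.Theory.
Local Open Scope ring_scope.

(* Projective plane P^2(F): points (and lines) are represented by the unique
   normalized homogeneous coordinate vector in F^3 \ {0} whose first nonzero
   coordinate equals 1.  Lines are given by dual coordinate vectors; a point
   P lies on a line l iff  sum_j P_j l_j = 0. *)

Section Proj.
Variable F : fieldType.

Definition c0 (v : 'rV[F]_3) := v ord0 (inord 0).
Definition c1 (v : 'rV[F]_3) := v ord0 (inord 1).
Definition c2 (v : 'rV[F]_3) := v ord0 (inord 2).

Definition normed (v : 'rV[F]_3) : bool :=
  if c0 v != 0 then c0 v == 1 else if c1 v != 0 then c1 v == 1 else c2 v == 1.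

Definition point := {v : 'rV[F]_3 | normed v}.
Definition line := {v : 'rV[F]_3 | normed v}.

Definition incid (P : point) (l : line) : Prop :=
  \sum_(j < 3) (val P) ord0 j * (val l) ord0 j = 0.

Definition pivot (v : 'rV[F]_3) :=
  if c0 v != 0 then c0 v else if c1 v != 0 then c1 v else c2 v.
Definition nrm (v : 'rV[F]_3) : 'rV[F]_3 := (pivot v)^-1 *: v.

Definition e0 : 'rV[F]_3 := \row_(j < 3) (if j == inord 0 then 1 else 0).
Lemma normed_e0 : normed e0.
Proof. by rewrite /normed /c0 mxE eqxx oner_eq0 /= eqxx. Qed.
Definition pt0 : point := exist _ e0 normed_e0.

Definition mkpt (v : 'rV[F]_3) : point := insubd pt0 (nrm v).

Definition cross (u v : 'rV[F]_3) : 'rV[F]_3 :=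
  \row_(j < 3) (if j == inord 0 then c1 u * c2 v - c2 u * c1 v
                else if j == inord 1 then c2 u * c0 v - c0 u * c2 v
                else c0 u * c1 v - c1 u * c0 v).

Definition join (X Y : point) : line := mkpt (cross (val X) (val Y)).
Definition meet (l m : line) : point := mkpt (cross (val l) (val m)).

Definition cross_ratio_is (A B C D : point) (r : F) : Prop :=
  exists l1 m1 l2 m2 : F,
    val C = l1 *: val A + m1 *: val B /\
    val D = l2 *: val A + m2 *: val B /\
    l1 * m2 != 0 /\ r = (m1 * l2) / (l1 * m2).

Definition collinear3 (X Y Z : point) : Prop :=
  exists l : line, [/\ incid X l, incid Y l & incid Z l].

(* A, C, B, D form a harmonic set with conjugate pairs {A,B}, {C,D} *)
Definition harmonic_set (A B C D : point) : Prop :=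
  [/\ uniq [:: val A; val B; val C; val D],
      (exists l : line, [/\ incid A l, incid B l, incid C l & incid D l])
    & cross_ratio_is A B C D (-1)].

Definition harmonic_pencil (l1 l2 l3 l4 : line) : Prop :=
  [/\ uniq [:: val l1; val l2; val l3; val l4],
      (exists O : point, [/\ incid O l1, incid O l2, incid O l3 & incid O l4])
    & exists m : line,
        (forall O : point, incid O l1 -> incid O l2 -> ~ incid O m) /\
        harmonic_set (meet m l1) (meet m l2) (meet m l3) (meet m l4)].

(* harmonic reflection rho_{P,m} as a (functional) relation: X |-> Y *)
Definition harm_refl (P : point) (m : line) (X Y : point) : Prop :=
  (X = P /\ Y = P) \/ (incid X m /\ Y = X) \/
  [/\ X <> P, ~ incid X m & harmonic_set P (meet (join X P) m) X Y].

(* the harmonic curve C_Q of the quadrangle with vertices A,C,B,D (cyclic order) *)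
Definition harmonic_curve (A C B D : point) (Z : point) : Prop :=
  Z = A \/ Z = C \/ Z = B \/ Z = D \/
  [/\ Z <> A, Z <> C, Z <> B, Z <> D &
      harmonic_pencil (join Z A) (join Z B) (join Z C) (join Z D)].

Definition quadrangle (A C B D : point) : Prop :=
  [/\ ~ collinear3 A C B, ~ collinear3 A C D, ~ collinear3 A B D
    & ~ collinear3 C B D].

Definition tangent_line (s1 s2 dg t : line) : Prop := harmonic_pencil s1 s2 dg t.

(* harmonic bundle of the lines l1,l2,l3,l4 (cyclic order) *)
Definition harmonic_bundle (l1 l2 l3 l4 : line) (z : line) : Prop :=
  z = l1 \/ z = l2 \/ z = l3 \/ z = l4 \/
  [/\ z <> l1, z <> l2, z <> l3, z <> l4 &
      harmonic_set (meet z l1) (meet z l3) (meet z l2) (meet z l4)].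

Definition polarity (pol : point -> line) : Prop :=
  bijective pol /\ forall P Q : point, incid P (pol Q) <-> incid Q (pol P).

Definition refl_maps_onto (P : point) (m : line) (S : point -> Prop) : Prop :=
  (forall X Y, harm_refl P m X Y -> S X -> S Y) /\
  (forall Y, S Y -> exists X, S X /\ harm_refl P m X Y).

End Proj.

(* In the frame of the reference points [A], [B], [C], with [D] of frame
   coordinates [(da, db, dc)], the lines from a point [Z] satisfy
   [ZC = l1 ZA + m1 ZB] and [ZD = l2 ZA + m2 ZB], and the pencil is harmonic
   exactly when [m1 l2 + l1 m2 = 0]. Clearing denominators this is the
   quadratic equation [db xa xc + da xb xc - 2 dc xa xb = 0] in the frame
   coordinates of [Z], so the harmonic curve is a conic, nondegenerate since
   the quadrangle is and [2 != 0]. Its polarity works: the conic consists of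
   the self-conjugate points; the harmonic reflection in [P] and its polar
   rescales the quadratic form by a square, so it preserves the conic; the
   tangent at each vertex, computed from its harmonic definition, is the polar
   of the vertex; and polarity turns the harmonic pencil at [Z] into a
   harmonic range on the polar of [Z], which puts that polar in the bundle. *)

From HB Require Import structures.
From mathcomp Require Import all_boot all_order all_algebra.
From mathcomp Require Import ring.
Set Implicit Arguments. Unset Strict Implicit. Unset Printing Implicit Defensive.
Import Order.TTheory GRing.Theory Num.Theory.
Local Open Scope ring_scope.
Set Bullet Behavior "Strict Subproofs".

Section Coordinates.
Variable F : fieldType.
Implicit Types u v w : 'rV[F]_3.

Lemma ord3_cases (i : 'I_3) : [\/ i = inord 0, i = inord 1 | i = inord 2].
Proof.
case: i => [[|[|[|k]]] Hi] //; [apply: Or31 | apply: Or32 | apply: Or33];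
  by apply/val_inj; rewrite /= inordK.
Qed.

Lemma row3P u v : c0 u = c0 v -> c1 u = c1 v -> c2 u = c2 v -> u = v.
Proof. by move=> h0 h1 h2; apply/rowP => i; case: (ord3_cases i) => ->. Qed.

Lemma inord_neq01 : (inord 0 : 'I_3) != inord 1.
Proof. by apply/eqP => /(f_equal val); rewrite /= !inordK. Qed.
Lemma inord_neq02 : (inord 0 : 'I_3) != inord 2.
Proof. by apply/eqP => /(f_equal val); rewrite /= !inordK. Qed.
Lemma inord_neq12 : (inord 1 : 'I_3) != inord 2.
Proof. by apply/eqP => /(f_equal val); rewrite /= !inordK. Qed.

Lemma c0D u v : c0 (u + v) = c0 u + c0 v. Proof. by rewrite /c0 mxE. Qed.
Lemma c1D u v : c1 (u + v) = c1 u + c1 v. Proof. by rewrite /c1 mxE. Qed.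
Lemma c2D u v : c2 (u + v) = c2 u + c2 v. Proof. by rewrite /c2 mxE. Qed.
Lemma c0N u : c0 (- u) = - c0 u. Proof. by rewrite /c0 mxE. Qed.
Lemma c1N u : c1 (- u) = - c1 u. Proof. by rewrite /c1 mxE. Qed.
Lemma c2N u : c2 (- u) = - c2 u. Proof. by rewrite /c2 mxE. Qed.
Lemma c0Z k u : c0 (k *: u) = k * c0 u. Proof. by rewrite /c0 mxE. Qed.
Lemma c1Z k u : c1 (k *: u) = k * c1 u. Proof. by rewrite /c1 mxE. Qed.
Lemma c2Z k u : c2 (k *: u) = k * c2 u. Proof. by rewrite /c2 mxE. Qed.
Lemma c00 : c0 (0 : 'rV[F]_3) = 0. Proof. by rewrite /c0 mxE. Qed.
Lemma c10 : c1 (0 : 'rV[F]_3) = 0. Proof. by rewrite /c1 mxE. Qed.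
Lemma c20 : c2 (0 : 'rV[F]_3) = 0. Proof. by rewrite /c2 mxE. Qed.
Lemma c0X u v : c0 (cross u v) = c1 u * c2 v - c2 u * c1 v.
Proof. by rewrite /c0 /cross mxE eqxx. Qed.
Lemma c1X u v : c1 (cross u v) = c2 u * c0 v - c0 u * c2 v.
Proof. by rewrite /c1 /cross mxE eq_sym (negPf inord_neq01) eqxx. Qed.
Lemma c2X u v : c2 (cross u v) = c0 u * c1 v - c1 u * c0 v.
Proof.
by rewrite /c2 /cross mxE eq_sym (negPf inord_neq02) eq_sym (negPf inord_neq12).
Qed.

Lemma sum3E (f : 'I_3 -> F) : \sum_(j < 3) f j = f (inord 0) + f (inord 1) + f (inord 2).
Proof.
rewrite !big_ord_recr big_ord0 /= add0r.
by congr (f _ + f _ + f _); apply/val_inj; rewrite /= inordK.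
Qed.

Definition dot u v := c0 u * c0 v + c1 u * c1 v + c2 u * c2 v.
Definition det3 u v w := dot u (cross v w).

End Coordinates.

Definition coordE := (c0D, c1D, c2D, c0N, c1N, c2N, c0Z, c1Z, c2Z,
  c00, c10, c20, c0X, c1X, c2X).

Ltac row3_ring := apply: row3P; rewrite ?coordE; ring.
Ltac dot_ring := rewrite /det3 /dot ?coordE; ring.

Section VectorAlgebra.
Variable F : fieldType.
Implicit Types u v w x l m : 'rV[F]_3.

Lemma row3_eq0 u : u = 0 <-> [/\ c0 u = 0, c1 u = 0 & c2 u = 0].
Proof.
split; first by move=> ->; rewrite !coordE.
by case=> h0 h1 h2; apply: row3P; rewrite ?coordE.
Qed.

Lemma row3_neq0 u : u != 0 -> [\/ c0 u != 0, c1 u != 0 | c2 u != 0].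
Proof.
move=> hu; case: (eqVneq (c0 u) 0) => h0; last exact: Or31.
case: (eqVneq (c1 u) 0) => h1; last exact: Or32.
case: (eqVneq (c2 u) 0) => h2; last exact: Or33.
by move: hu; rewrite (proj2 (row3_eq0 u)) ?eqxx.
Qed.

Lemma crossvv u : cross u u = 0. Proof. row3_ring. Qed.
Lemma crossC u v : cross u v = - cross v u. Proof. row3_ring. Qed.
Lemma crossDl u v w : cross (u + v) w = cross u w + cross v w. Proof. row3_ring. Qed.
Lemma crossDr u v w : cross w (u + v) = cross w u + cross w v. Proof. row3_ring. Qed.
Lemma crossBr u v w : cross w (u - v) = cross w u - cross w v. Proof. row3_ring. Qed.
Lemma crossZl k u v : cross (k *: u) v = k *: cross u v. Proof. row3_ring. Qed.
Lemma crossZr k u v : cross u (k *: v) = k *: cross u v. Proof. row3_ring. Qed.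
Lemma cross0l u : cross 0 u = 0. Proof. row3_ring. Qed.
Lemma cross0r u : cross u 0 = 0. Proof. row3_ring. Qed.

Lemma cross_comb x u v s t :
  cross x (s *: u + t *: v) = s *: cross x u + t *: cross x v.
Proof. row3_ring. Qed.

Lemma dotC u v : dot u v = dot v u. Proof. dot_ring. Qed.
Lemma dotDl u v w : dot (u + v) w = dot u w + dot v w. Proof. dot_ring. Qed.
Lemma dotDr u v w : dot w (u + v) = dot w u + dot w v. Proof. dot_ring. Qed.
Lemma dotBl u v w : dot (u - v) w = dot u w - dot v w. Proof. dot_ring. Qed.
Lemma dotZl k u v : dot (k *: u) v = k * dot u v. Proof. dot_ring. Qed.
Lemma dotZr k u v : dot u (k *: v) = k * dot u v. Proof. dot_ring. Qed.
Lemma dot0r u : dot u 0 = 0. Proof. dot_ring. Qed.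
Lemma dot_crossl u v : dot u (cross u v) = 0. Proof. dot_ring. Qed.
Lemma dot_crossr u v : dot v (cross u v) = 0. Proof. dot_ring. Qed.

Lemma cross_crossl u v w : cross (cross u v) w = dot u w *: v - dot v w *: u.
Proof. rewrite /dot; row3_ring. Qed.

Lemma cross_cross_common x u v : cross (cross x u) (cross x v) = det3 x u v *: x.
Proof. rewrite /det3 /dot; row3_ring. Qed.

Lemma cross_eq0_scale u v : u != 0 -> cross u v = 0 -> exists k, v = k *: u.
Proof.
move=> hu /row3_eq0; rewrite !coordE => -[/subr0_eq x0 /subr0_eq x1 /subr0_eq x2].
case: (row3_neq0 hu) => h.
- exists (c0 v / c0 u); apply: row3P; rewrite !coordE.
  + by rewrite divfK.
  + by rewrite -(mulKf h (c1 v)) x2; field.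
  + by rewrite -(mulKf h (c2 v)) -x1; field.
- exists (c1 v / c1 u); apply: row3P; rewrite !coordE.
  + by rewrite -(mulKf h (c0 v)) -x2; field.
  + by rewrite divfK.
  + by rewrite -(mulKf h (c2 v)) x0; field.
- exists (c2 v / c2 u); apply: row3P; rewrite !coordE.
  + by rewrite -(mulKf h (c0 v)) x1; field.
  + by rewrite -(mulKf h (c1 v)) -x0; field.
  + by rewrite divfK.
Qed.

Lemma orth2_cross_scale l m x : cross l m != 0 -> dot x l = 0 -> dot x m = 0 ->
  exists k, x = k *: cross l m.
Proof.
move=> h hl hm; have := cross_crossl l m x.
rewrite dotC hl dotC hm !scale0r subr0 => /(cross_eq0_scale h) [k ->].
by exists k.
Qed.

Definition erow (i : 'I_3) : 'rV[F]_3 := \row_(j < 3) (if j == i then 1 else 0).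

Lemma erow_dot u i : dot u (erow i) = u ord0 i.
Proof.
rewrite /dot /c0 /c1 /c2 /erow !mxE.
have n01 := negPf inord_neq01; have n02 := negPf inord_neq02.
have n12 := negPf inord_neq12.
case: (ord3_cases i) => ->; rewrite eqxx ?n01 ?n02 ?n12 ?(eq_sym _ (inord 0)) ?n01 ?n02
  ?(eq_sym _ (inord 1)) ?n12; by rewrite !mulr0 !mulr1 ?addr0 ?add0r.
Qed.

End VectorAlgebra.

Section ProjectivePlane.
Variable F : fieldType.
Implicit Types (u v w x l m : 'rV[F]_3) (P Q X Y Z : point F).

Lemma normed_neq0 v : normed v -> v != 0.
Proof.
move=> hv; apply/eqP => e; move: hv; rewrite e /normed !coordE eqxx /=.
by rewrite eq_sym oner_eq0.
Qed.

Lemma point_neq0 P : val P != 0.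
Proof. exact: normed_neq0 (valP P). Qed.

Lemma normed_nrm v : v != 0 -> normed (nrm v).
Proof.
move=> hv; rewrite /normed /nrm /pivot !coordE.
case: (eqVneq (c0 v) 0) => h0 /=; last by rewrite mulVf // oner_eq0 /=.
rewrite h0 mulr0 eqxx /=.
case: (eqVneq (c1 v) 0) => h1 /=; last by rewrite mulVf // oner_eq0 /=.
rewrite h1 mulr0 eqxx /=.
case: (eqVneq (c2 v) 0) => h2; last by rewrite mulVf.
by move: hv; rewrite (proj2 (row3_eq0 v)) ?eqxx.
Qed.

Lemma val_mkpt_scale v : v != 0 -> exists2 k, k != 0 & val (mkpt v) = k *: v.
Proof.
move=> hv; exists (pivot v)^-1; last by rewrite /mkpt insubdK //; exact: normed_nrm.
rewrite invr_eq0 /pivot.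
case: (eqVneq (c0 v) 0) => h0 //=; case: (eqVneq (c1 v) 0) => h1 //=.
by apply/eqP => h2; move: hv; rewrite (proj2 (row3_eq0 v)) ?eqxx.
Qed.

Lemma normed_scale_eq u v k : normed u -> normed v -> u = k *: v -> u = v.
Proof.
move=> hu hv e; have hu0 := normed_neq0 hu.
have k_neq0 : k != 0 by apply: contraNneq hu0 => k0; rewrite e k0 scale0r.
move: hu hv; rewrite e /normed !coordE.
case: (eqVneq (c0 v) 0) => h0 /=.
  rewrite h0 mulr0 !eqxx /=; case: (eqVneq (c1 v) 0) => h1 /=.
    by rewrite h1 mulr0 !eqxx /= => /eqP + /eqP h2'; rewrite h2' mulr1 => ->; rewrite scale1r.
  by move=> + /eqP h1'; rewrite h1' mulr1 k_neq0 => /eqP ->; rewrite scale1r.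
by move=> + /eqP h0'; rewrite h0' mulr1 k_neq0 => /eqP ->; rewrite scale1r.
Qed.

Lemma point_eq_scale P Q k : val P = k *: val Q -> P = Q.
Proof. by move=> e; apply/val_inj/(normed_scale_eq (valP P) (valP Q) e). Qed.

Lemma mkptZ v k : v != 0 -> k != 0 -> mkpt (k *: v) = mkpt v.
Proof.
move=> hv hk; have hkv : k *: v != 0 by rewrite scaler_eq0 negb_or hk.
have [k1 hk1 e1] := val_mkpt_scale hkv; have [k2 hk2 e2] := val_mkpt_scale hv.
apply: (@point_eq_scale _ _ (k1 * k / k2)).
by rewrite e1 e2 !scalerA divfK.
Qed.

Lemma mkpt_val P : mkpt (val P) = P.
Proof.
have [k hk e] := val_mkpt_scale (point_neq0 P).
exact: point_eq_scale e.
Qed.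

Lemma mkpt_eq_scale u v : u != 0 -> v != 0 -> mkpt u = mkpt v ->
  exists2 k, k != 0 & v = k *: u.
Proof.
move=> hu hv e; have [k1 hk1 e1] := val_mkpt_scale hu.
have [k2 hk2 e2] := val_mkpt_scale hv.
exists (k1 / k2); first by rewrite mulf_neq0 ?invr_eq0.
apply: (scalerI hk2); rewrite -e2 -e e1 scalerA; congr (_ *: _).
by rewrite mulrCA mulfV // mulr1.
Qed.

Lemma uniq4_neq12 P Q X Y : uniq [:: val P; val Q; val X; val Y] -> P <> Q.
Proof. by rewrite /= !inE => /andP[/norP[+ _] _] e; rewrite e eqxx. Qed.

Definition indep u v := forall s t : F, s *: u + t *: v = 0 -> s = 0 /\ t = 0.

Lemma indep_of_cross u v : cross u v != 0 -> indep u v.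
Proof.
move=> h s t e.
have /eqP : s *: cross u v = 0.
  by have := f_equal (fun y => cross y v) e; rewrite crossDl !crossZl crossvv scaler0 addr0 cross0l.
have /eqP : t *: cross u v = 0.
  by have := f_equal (cross u) e; rewrite crossDr !crossZr crossvv scaler0 add0r cross0r.
by rewrite !scaler_eq0 (negPf h) !orbF => /eqP -> /eqP ->.
Qed.

Lemma cross_of_indep u v : indep u v -> cross u v != 0.
Proof.
move=> hi; apply/eqP => huv.
have hu : u != 0.
  apply/eqP => u0; have /hi [/eqP] : 1 *: u + 0 *: v = 0 by rewrite u0 scaler0 scale0r addr0.
  by rewrite oner_eq0.
have [k ek] := cross_eq0_scale hu huv.
have /hi [_ /eqP] : k *: u + (-1) *: v = 0 by rewrite ek scaleN1r subrr.
by rewrite oppr_eq0 oner_eq0.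
Qed.

Lemma indep_neq0 u v : indep u v -> u != 0 /\ v != 0.
Proof.
move/cross_of_indep => h; split; apply: contraNneq h => ->;
  by rewrite ?cross0l ?cross0r.
Qed.

Lemma comb_neq0 u v s t : indep u v -> (s != 0) || (t != 0) -> s *: u + t *: v != 0.
Proof. by move=> hi hst; apply/eqP => /hi [s0 t0]; move: hst; rewrite s0 t0 eqxx. Qed.

Lemma indep_of_mkpt_neq u v : u != 0 -> v != 0 -> mkpt u <> mkpt v -> indep u v.
Proof.
move=> hu hv hne; case: (eqVneq (cross u v) 0) => hc; last exact: indep_of_cross.
have [k ek] := cross_eq0_scale hu hc.
have hk : k != 0 by apply: contraNneq hv => k0; rewrite ek k0 scale0r.
by case: hne; rewrite ek mkptZ.
Qed.

Lemma cross_points_neq0 P Q : P <> Q -> cross (val P) (val Q) != 0.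
Proof.
move=> h; apply/eqP => e; have [k ek] := cross_eq0_scale (point_neq0 P) e.
by apply/h/esym/(point_eq_scale ek).
Qed.

Lemma exists_dot_neq0 v : v != 0 -> exists q, dot v q != 0.
Proof.
move=> hv; case: (row3_neq0 hv) => h;
  [exists (erow F (inord 0)) | exists (erow F (inord 1)) | exists (erow F (inord 2))];
  by rewrite erow_dot.
Qed.

Lemma dot_cross_eq0_span p1 p2 l : cross p1 p2 != 0 -> dot l (cross p1 p2) = 0 ->
  exists s t, l = s *: p1 + t *: p2.
Proof.
move=> hn hl; have [q hq] := exists_dot_neq0 hn.
(* Cramer's rule in the basis [p1, p2, q]. *)
have cramer : dot q (cross p1 p2) *: l = dot q (cross l p2) *: p1 + dot q (cross p1 l) *: p2
   + dot l (cross p1 p2) *: q by rewrite /dot; row3_ring.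
rewrite hl scale0r addr0 in cramer.
have hq' : dot q (cross p1 p2) != 0 by rewrite dotC.
exists (dot q (cross l p2) / dot q (cross p1 p2)), (dot q (cross p1 l) / dot q (cross p1 p2)).
apply: (scalerI hq'); rewrite cramer scalerDr !scalerA !(mulrC (dot q (cross p1 p2))).
by rewrite !divfK.
Qed.

Lemma incidE P (l : line F) : incid P l <-> dot (val P) (val l) = 0.
Proof. by rewrite /incid sum3E. Qed.

Lemma incid_mkpt_mkpt x y : x != 0 -> y != 0 -> incid (mkpt x) (mkpt y) <-> dot x y = 0.
Proof.
move=> hx hy; rewrite incidE; have [k hk ->] := val_mkpt_scale hx.
have [k' hk' ->] := val_mkpt_scale hy; rewrite dotZl dotZr.
by split => [/eqP|->]; rewrite ?mulr0 // !mulf_eq0 (negPf hk) (negPf hk') => /eqP.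
Qed.

Lemma incid_mkpt P v : v != 0 -> incid P (mkpt v) <-> dot (val P) v = 0.
Proof.
move=> hv; rewrite incidE; have [k hk ->] := val_mkpt_scale hv; rewrite dotZr.
by split => [/eqP|->]; rewrite ?mulr0 // mulf_eq0 (negPf hk) => /eqP.
Qed.

Lemma mkpt_incid v (l : line F) : v != 0 -> incid (mkpt v) l <-> dot v (val l) = 0.
Proof.
move=> hv; rewrite incidE; have [k hk ->] := val_mkpt_scale hv; rewrite dotZl.
by split => [/eqP|->]; rewrite ?mulr0 // mulf_eq0 (negPf hk) => /eqP.
Qed.

Lemma join_incidl X Y : X <> Y -> incid X (join X Y).
Proof. by move=> h; rewrite incid_mkpt ?cross_points_neq0 // dot_crossl. Qed.
Lemma join_incidr X Y : X <> Y -> incid Y (join X Y).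
Proof. by move=> h; rewrite incid_mkpt ?cross_points_neq0 // dot_crossr. Qed.
Lemma meet_incidr (l m : line F) : l <> m -> incid (meet l m) m.
Proof. by move=> h; rewrite mkpt_incid ?cross_points_neq0 // dotC dot_crossr. Qed.

Lemma meet_eq (l m : line F) X : l <> m -> incid X l -> incid X m -> X = meet l m.
Proof.
move=> h /incidE hl /incidE hm; have hc := cross_points_neq0 h.
have [k ek] := orth2_cross_scale hc hl hm; have [k' hk' e'] := val_mkpt_scale hc.
by apply: (@point_eq_scale _ _ (k / k')); rewrite e' scalerA divfK.
Qed.

Lemma join_eq X Y (l : line F) : X <> Y -> incid X l -> incid Y l -> l = join X Y.
Proof.
move=> h /incidE hl /incidE hm; have hc := cross_points_neq0 h.
rewrite dotC in hl; rewrite dotC in hm.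
have [k ek] := orth2_cross_scale hc hl hm; have [k' hk' e'] := val_mkpt_scale hc.
by apply: (@point_eq_scale _ _ (k / k')); rewrite e' scalerA divfK.
Qed.

Lemma exists_line X : exists l : line F, incid X l.
Proof.
have c_erow i j : (erow F i) ord0 j = (j == i)%:R by rewrite /erow mxE; case: (j == i).
set x := val X; suff [q hq] : exists q, cross x q != 0.
  by exists (mkpt (cross x q)); rewrite incid_mkpt // dot_crossl.
have [h | h | h] := row3_neq0 (point_neq0 X).
- exists (erow F (inord 2)); apply: contra h => /eqP/row3_eq0[_ + _].
  rewrite c1X /c0 /c2 !c_erow eqxx (negPf inord_neq02) mulr0 mulr1 sub0r.
  by move/eqP; rewrite oppr_eq0.
- exists (erow F (inord 2)); apply: contra h => /eqP/row3_eq0[+ _ _].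
  by rewrite c0X /c1 /c2 !c_erow eqxx (negPf inord_neq12) mulr0 mulr1 subr0 => ->.
- exists (erow F (inord 0)); apply: contra h => /eqP/row3_eq0[_ + _].
  by rewrite c1X /c0 /c2 !c_erow eqxx eq_sym (negPf inord_neq02) mulr0 mulr1 subr0 => ->.
Qed.

Lemma det3_neq0_of_noncollinear X Y Z :
  ~ collinear3 X Y Z -> det3 (val X) (val Y) (val Z) != 0.
Proof.
move=> nc; apply/eqP => hdet; apply: nc.
case: (eqVneq Y Z) => [<- | /eqP nYZ].
  case: (eqVneq X Y) => [<- | /eqP nXY].
    by have [l hl] := exists_line X; exists l.
  by exists (join X Y); split; [exact: join_incidl | exact: join_incidr ..].
exists (mkpt (cross (val Y) (val Z))); have hc := cross_points_neq0 nYZ.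
by split; rewrite incid_mkpt // ?dot_crossl ?dot_crossr.
Qed.

End ProjectivePlane.

Section HarmonicCoordinates.
Variable F : fieldType.
Implicit Types (u v w z p x : 'rV[F]_3).

(* [w = l1 u + m1 v] and [z = l2 u + m2 v] are harmonic conjugates w.r.t. [u, v]. *)
Definition harmonic_coef (l1 m1 l2 m2 : F) := l1 * m2 != 0 /\ m1 * l2 = - (l1 * m2).

Lemma harmonic_coef_neq0 l1 m1 l2 m2 : harmonic_coef l1 m1 l2 m2 ->
  [/\ l1 != 0, m1 != 0, l2 != 0 & m2 != 0].
Proof.
case=> h e; have h' : m1 * l2 != 0 by rewrite e oppr_eq0.
by move: h h'; rewrite !mulf_eq0 !negb_or => /andP[-> ->] /andP[-> ->].
Qed.

Lemma indep_coord_eq u v s t s' t' : indep u v ->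
  s *: u + t *: v = s' *: u + t' *: v -> s = s' /\ t = t'.
Proof.
move=> hi e; have /hi [/subr0_eq -> /subr0_eq ->] : (s - s') *: u + (t - t') *: v = 0.
  by rewrite !scalerBl addrACA -opprD e subrr.
by split.
Qed.

Lemma scaled_coordsE u v su sv sw l m L M : indep u v -> su != 0 -> sv != 0 ->
  sw *: (l *: u + m *: v) = L *: (su *: u) + M *: (sv *: v) <->
  L = sw * l / su /\ M = sw * m / sv.
Proof.
move=> hi hsu hsv; rewrite scalerDr !scalerA.
split=> [/(indep_coord_eq hi) [el em] | [-> ->]]; last by rewrite !divfK.
by rewrite el em !mulfK.
Qed.

Lemma cross_ratio_mkpt u v w z l1 m1 l2 m2 r : indep u v ->
  w = l1 *: u + m1 *: v -> z = l2 *: u + m2 *: v -> w != 0 -> z != 0 ->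
  cross_ratio_is (mkpt u) (mkpt v) (mkpt w) (mkpt z) r <->
  l1 * m2 != 0 /\ r = m1 * l2 / (l1 * m2).
Proof.
move=> hi ew ez hw hz; have [hu hv] := indep_neq0 hi; rewrite /cross_ratio_is.
have [su hsu ->] := val_mkpt_scale hu; have [sv hsv ->] := val_mkpt_scale hv.
have [sw hsw ->] := val_mkpt_scale hw; have [sz hsz ->] := val_mkpt_scale hz.
rewrite ew ez; split.
- case=> _ [_ [_ [_ [/(scaled_coordsE _ _ _ _ _ hi hsu hsv) [-> ->]
    [/(scaled_coordsE _ _ _ _ _ hi hsu hsv) [-> ->] [hL ->]]]]]].
  have /andP[hl1 hm2] : (l1 != 0) && (m2 != 0).
    move: hL; rewrite !mulf_eq0 !negb_or.
    by case/andP=> /andP[/andP[_ ->] _] /andP[/andP[_ ->] _].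
  by split; [rewrite mulf_neq0 | field; rewrite hsu hsv hsw hsz hl1 hm2].
- case=> hl ->; have /andP[hl1 hm2] : (l1 != 0) && (m2 != 0) by rewrite -negb_or -mulf_eq0.
  exists (sw * l1 / su), (sw * m1 / sv), (sz * l2 / su), (sz * m2 / sv).
  split; first exact/(scaled_coordsE _ _ _ _ _ hi hsu hsv).
  split; first exact/(scaled_coordsE _ _ _ _ _ hi hsu hsv).
  by split; [rewrite !mulf_neq0 ?invr_eq0 | field; rewrite hsu hsv hsw hsz hl1 hm2].
Qed.

Lemma mkpt_comb_neq u v a b c d : indep u v -> a * d - b * c != 0 ->
  mkpt (a *: u + b *: v) <> mkpt (c *: u + d *: v).
Proof.
move=> hi hdet e.
have hab : (a != 0) || (b != 0).
  by apply: contraNT hdet; rewrite negb_or !negbK => /andP[/eqP-> /eqP->]; rewrite !mul0r subr0.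
have hcd : (c != 0) || (d != 0).
  by apply: contraNT hdet; rewrite negb_or !negbK => /andP[/eqP-> /eqP->]; rewrite !mulr0 subr0.
have [k hk] := mkpt_eq_scale (comb_neq0 hi hab) (comb_neq0 hi hcd) e.
rewrite scalerDr !scalerA => /(indep_coord_eq hi) [ec ed].
by move: hdet; rewrite ec ed (_ : _ - _ = 0) ?eqxx //; ring.
Qed.

Lemma dot_comb_cross u v s t : dot (s *: u + t *: v) (cross u v) = 0.
Proof. by rewrite dotDl !dotZl dot_crossl dot_crossr !mulr0 addr0. Qed.

Lemma harmonic_conjugate_unique u v l1 m1 l2 m2 l2' m2' :
  harmonic_coef l1 m1 l2 m2 -> harmonic_coef l1 m1 l2' m2' ->
  l2' *: u + m2' *: v = (m2' / m2) *: (l2 *: u + m2 *: v).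
Proof.
move=> H [_ e']; have [_ m1_neq0 _ m2_neq0] := harmonic_coef_neq0 H; case: H => _ e.
rewrite scalerDr !scalerA divfK //; congr (_ *: _ + _).
by apply: (mulfI m1_neq0); rewrite e' mulrCA e; field.
Qed.

Hypothesis two_neq0 : (2 : F) != 0.

Lemma harmonic_coef_uniq u v l1 m1 l2 m2 : indep u v -> harmonic_coef l1 m1 l2 m2 ->
  uniq [:: val (mkpt u); val (mkpt v);
           val (mkpt (l1 *: u + m1 *: v)); val (mkpt (l2 *: u + m2 *: v))].
Proof.
move=> hi H; have [n1 n2 n3 n4] := harmonic_coef_neq0 H; case: H => H1 H2.
have eu : mkpt u = mkpt (1 *: u + 0 *: v) by rewrite scale1r scale0r addr0.
have ev : mkpt v = mkpt (0 *: u + 1 *: v) by rewrite scale1r scale0r add0r.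
rewrite /= !inE !negb_or; rewrite eu ev; apply/and4P; split;
  rewrite ?andbT; try apply/and3P; try apply/andP; try split;
  apply/eqP => /val_inj; apply: mkpt_comb_neq hi _.
- by rewrite mulr1 mulr0 subr0 oner_eq0.
- by rewrite mul1r mul0r subr0.
- by rewrite mul1r mul0r subr0.
- by rewrite mul0r mul1r sub0r oppr_eq0.
- by rewrite mul0r mul1r sub0r oppr_eq0.
- by rewrite H2 opprK -mulr2n -mulr_natl mulf_neq0.
Qed.

Lemma harmonic_setE u v w z l1 m1 l2 m2 : indep u v ->
  w = l1 *: u + m1 *: v -> z = l2 *: u + m2 *: v -> w != 0 -> z != 0 ->
  harmonic_set (mkpt u) (mkpt v) (mkpt w) (mkpt z) <-> harmonic_coef l1 m1 l2 m2.
Proof.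
move=> hi ew ez hw hz; have hcr := cross_ratio_mkpt (-1) hi ew ez hw hz.
split=> [[_ _ /hcr [hl e]] | H].
  by split=> //; rewrite -[m1 * l2](divfK hl) -e mulN1r.
have hl := H.1; split.
- by rewrite ew ez; exact: harmonic_coef_uniq.
- have [hu hv] := indep_neq0 hi; have huv := cross_of_indep hi.
  exists (mkpt (cross u v)); split; apply/incid_mkpt_mkpt => //;
    by rewrite ?ew ?ez ?dot_comb_cross ?dot_crossl ?dot_crossr.
- by apply/hcr; split; rewrite // H.2 mulNr divff.
Qed.

Lemma harmonic_pencilE p1 p2 p3 p4 l1 m1 l2 m2 : indep p1 p2 ->
  p3 = l1 *: p1 + m1 *: p2 -> p4 = l2 *: p1 + m2 *: p2 -> p3 != 0 -> p4 != 0 ->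
  harmonic_pencil (mkpt p1) (mkpt p2) (mkpt p3) (mkpt p4) <-> harmonic_coef l1 m1 l2 m2.
Proof.
move=> hi e3 e4 h3 h4; have [hp1 hp2] := indep_neq0 hi; have hc12 := cross_of_indep hi.
(* A transversal [m] misses the centre [cross p1 p2] exactly when this dot is nonzero. *)
have sectionE (m : line F) : dot (cross p1 p2) (val m) != 0 ->
    harmonic_set (meet m (mkpt p1)) (meet m (mkpt p2)) (meet m (mkpt p3)) (meet m (mkpt p4))
    <-> harmonic_coef l1 m1 l2 m2.
  move=> hm; set mv := val m.
  have meetE p : p != 0 -> cross mv p != 0 -> meet m (mkpt p) = mkpt (cross mv p).
    by move=> hp hc; rewrite /meet; have [k hk ->] := val_mkpt_scale hp; rewrite crossZr mkptZ.
  have hi' : indep (cross mv p1) (cross mv p2).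
    apply: indep_of_cross.
    by rewrite cross_cross_common scaler_eq0 negb_or /det3 dotC hm point_neq0.
  have [hu hv] := indep_neq0 hi'.
  have e3' : cross mv p3 = l1 *: cross mv p1 + m1 *: cross mv p2 by rewrite e3 cross_comb.
  have e4' : cross mv p4 = l2 *: cross mv p1 + m2 *: cross mv p2 by rewrite e4 cross_comb.
  have nz3 : cross mv p3 != 0.
    by rewrite e3' comb_neq0 //; apply: contraNT h3 => /norP[/negbNE/eqP l0 /negbNE/eqP m0];
      rewrite e3 l0 m0 !scale0r addr0.
  have nz4 : cross mv p4 != 0.
    by rewrite e4' comb_neq0 //; apply: contraNT h4 => /norP[/negbNE/eqP l0 /negbNE/eqP m0];
      rewrite e4 l0 m0 !scale0r addr0.
  by rewrite !meetE //; exact: harmonic_setE.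
split.
- case=> _ _ [m [hm /sectionE]]; apply; apply/eqP => hd.
  apply: (hm (mkpt (cross p1 p2))); last by rewrite mkpt_incid.
  1,2: by rewrite incid_mkpt_mkpt // dotC ?dot_crossl ?dot_crossr.
- move=> H; split.
  + by rewrite e3 e4; exact: harmonic_coef_uniq.
  + exists (mkpt (cross p1 p2)); split; apply/incid_mkpt_mkpt => //; rewrite dotC;
      by rewrite ?e3 ?e4 ?dot_comb_cross ?dot_crossl ?dot_crossr.
  + have [q hq] := exists_dot_neq0 hc12.
    have hq0 : q != 0 by apply: contraNneq hq => ->; rewrite dot0r.
    exists (mkpt q); split; last first.
      by apply/sectionE => //; have [k hk ->] := val_mkpt_scale hq0; rewrite dotZr mulf_neq0.
    move=> O /incid_mkpt - /(_ hp1) o1 /incid_mkpt - /(_ hp2) o2.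
    rewrite incid_mkpt // => o3; have [k ek] := orth2_cross_scale hc12 o1 o2.
    move: o3 (point_neq0 O); rewrite ek dotZl => /eqP.
    by rewrite mulf_eq0 (negPf hq) orbF => /eqP ->; rewrite scale0r eqxx.
Qed.

End HarmonicCoordinates.

Ltac neq0 := repeat first
  [ assumption | apply: mulf_neq0 | apply: expf_neq0 | rewrite oppr_eq0 | rewrite invr_eq0 ].

Section QuadrangleConic.
Variable F : fieldType.
Hypothesis two_neq0 : (2 : F) != 0.
Variables A C B D : point F.
Implicit Types (u v w x y z p q : 'rV[F]_3) (P Q X Y Z : point F).

Local Notation a := (val A).
Local Notation b := (val B).
Local Notation c := (val C).
Local Notation d := (val D).

(* Coordinates with respect to the frame [a, b, c], scaled by [det3 a b c]. *)
Definition xa x := det3 x b c.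
Definition xb x := det3 x c a.
Definition xc x := det3 x a b.
Definition delta := xa a.

Hypotheses (delta_neq0 : delta != 0) (xa_d_neq0 : xa d != 0)
  (xb_d_neq0 : xb d != 0) (xc_d_neq0 : xc d != 0).

Lemma frame_decomp x : delta *: x = xa x *: a + xb x *: b + xc x *: c.
Proof. rewrite /delta /xa /xb /xc /det3 /dot; row3_ring. Qed.

Lemma dual_frame_decomp w :
  delta *: w = dot w a *: cross b c + dot w b *: cross c a + dot w c *: cross a b.
Proof. rewrite /delta /xa /det3 /dot; row3_ring. Qed.

Lemma xa_b : xa b = 0. Proof. rewrite /xa; dot_ring. Qed.
Lemma xa_c : xa c = 0. Proof. rewrite /xa; dot_ring. Qed.
Lemma xb_a : xb a = 0. Proof. rewrite /xb; dot_ring. Qed.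
Lemma xb_b : xb b = delta. Proof. rewrite /xb /delta /xa; dot_ring. Qed.
Lemma xb_c : xb c = 0. Proof. rewrite /xb; dot_ring. Qed.
Lemma xc_a : xc a = 0. Proof. rewrite /xc; dot_ring. Qed.
Lemma xc_b : xc b = 0. Proof. rewrite /xc; dot_ring. Qed.
Lemma xc_c : xc c = delta. Proof. rewrite /xc /delta /xa; dot_ring. Qed.
Definition frameE := (xa_b, xa_c, xb_a, xb_b, xb_c, xc_a, xc_b, xc_c).

Lemma xaD x y : xa (x + y) = xa x + xa y. Proof. exact: dotDl. Qed.
Lemma xbD x y : xb (x + y) = xb x + xb y. Proof. exact: dotDl. Qed.
Lemma xcD x y : xc (x + y) = xc x + xc y. Proof. exact: dotDl. Qed.
Lemma xaB x y : xa (x - y) = xa x - xa y. Proof. exact: dotBl. Qed.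
Lemma xbB x y : xb (x - y) = xb x - xb y. Proof. exact: dotBl. Qed.
Lemma xcB x y : xc (x - y) = xc x - xc y. Proof. exact: dotBl. Qed.
Lemma xaZ k x : xa (k *: x) = k * xa x. Proof. exact: dotZl. Qed.
Lemma xbZ k x : xb (k *: x) = k * xb x. Proof. exact: dotZl. Qed.
Lemma xcZ k x : xc (k *: x) = k * xc x. Proof. exact: dotZl. Qed.
Definition xlinE := (xaB, xbB, xcB, xaD, xbD, xcD, xaZ, xbZ, xcZ).

(* In frame coordinates the harmonic curve is the conic
   [xb d * xa * xc + xa d * xb * xc - 2 * xc d * xa * xb = 0],
   through the coordinate points and [d]; [bform] is its polar form. *)
Definition bform x y :=
  xb d * (xa x * xc y + xc x * xa y) + xa d * (xb x * xc y + xc x * xb y)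
  - 2 * xc d * (xa x * xb y + xb x * xa y).

Lemma bformC x y : bform x y = bform y x. Proof. rewrite /bform; ring. Qed.
Lemma bformDl x y z : bform (x + y) z = bform x z + bform y z.
Proof. rewrite /bform !xlinE; ring. Qed.
Lemma bformDr x y z : bform z (x + y) = bform z x + bform z y.
Proof. rewrite /bform !xlinE; ring. Qed.
Lemma bformBl x y z : bform (x - y) z = bform x z - bform y z.
Proof. rewrite /bform !xlinE; ring. Qed.
Lemma bformBr x y z : bform z (x - y) = bform z x - bform z y.
Proof. rewrite /bform !xlinE; ring. Qed.
Lemma bformZl k x y : bform (k *: x) y = k * bform x y.
Proof. rewrite /bform !xlinE; ring. Qed.
Lemma bformZr k x y : bform x (k *: y) = k * bform x y.
Proof. rewrite /bform !xlinE; ring. Qed.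
Definition bformE := (bformBl, bformBr, bformDl, bformDr, bformZl, bformZr).

Lemma bform_vertex_a : bform a a = 0. Proof. rewrite /bform !frameE; ring. Qed.
Lemma bform_vertex_b : bform b b = 0. Proof. rewrite /bform !frameE; ring. Qed.
Lemma bform_vertex_c : bform c c = 0. Proof. rewrite /bform !frameE; ring. Qed.
Lemma bform_vertex_d : bform d d = 0. Proof. rewrite /bform; ring. Qed.

Definition polar_vec y :=
  (xb d * xc y - 2 * xc d * xb y) *: cross b c
  + (xa d * xc y - 2 * xc d * xa y) *: cross c a
  + (xb d * xa y + xa d * xb y) *: cross a b.

Lemma dot_polar_vec x y : dot x (polar_vec y) = bform x y.
Proof. rewrite /polar_vec /bform /xa /xb /xc /det3 !dotDr !dotZr; ring. Qed.

Lemma polar_vecD x y : polar_vec (x + y) = polar_vec x + polar_vec y.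
Proof. rewrite /polar_vec !xlinE; row3_ring. Qed.
Lemma polar_vecZ k y : polar_vec (k *: y) = k *: polar_vec y.
Proof. rewrite /polar_vec !xlinE; row3_ring. Qed.

(* An explicit inverse of [polar_vec] up to the factor [delta]; the
   [pole_c], [pole_a], [pole_b] are the frame coordinates of the pole. *)
Definition pole_c w :=
  (2 * xc d * dot w c + xb d * dot w b + xa d * dot w a) / (2 * xa d * xb d).
Definition pole_a w := (xa d * pole_c w - dot w b) / (2 * xc d).
Definition pole_b w := (xb d * pole_c w - dot w a) / (2 * xc d).
Definition pole_vec w := delta^-1 *: (pole_a w *: a + pole_b w *: b + pole_c w *: c).

Lemma polar_vec_pole w : polar_vec (pole_vec w) = delta *: w.
Proof.
have xa_pole : xa (pole_vec w) = pole_a w.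
  by rewrite /pole_vec !xlinE !frameE /delta; field.
have xb_pole : xb (pole_vec w) = pole_b w.
  by rewrite /pole_vec !xlinE !frameE /delta; field.
have xc_pole : xc (pole_vec w) = pole_c w.
  by rewrite /pole_vec !xlinE !frameE /delta; field.
rewrite dual_frame_decomp /polar_vec xa_pole xb_pole xc_pole.
congr (_ *: _ + _ *: _ + _ *: _); rewrite /pole_a /pole_b /pole_c; field;
  by rewrite ?two_neq0 ?xa_d_neq0 ?xb_d_neq0 ?xc_d_neq0.
Qed.

Lemma pole_vec_polar y : pole_vec (polar_vec y) = delta *: y.
Proof.
have dot_polar_a : dot (polar_vec y) a = delta * (xb d * xc y - 2 * xc d * xb y).
  by rewrite dotC dot_polar_vec /bform !frameE -/delta; ring.
have dot_polar_b : dot (polar_vec y) b = delta * (xa d * xc y - 2 * xc d * xa y).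
  by rewrite dotC dot_polar_vec /bform !frameE -/delta; ring.
have dot_polar_c : dot (polar_vec y) c = delta * (xb d * xa y + xa d * xb y).
  by rewrite dotC dot_polar_vec /bform !frameE -/delta; ring.
rewrite /pole_vec /pole_a /pole_b /pole_c dot_polar_a dot_polar_b dot_polar_c.
apply: (scalerI delta_neq0).
rewrite scalerA mulfV // scale1r frame_decomp !scalerDr !scalerA.
congr (_ *: _ + _ *: _ + _ *: _); field;
  by rewrite ?two_neq0 ?xa_d_neq0 ?xb_d_neq0 ?xc_d_neq0.
Qed.

Lemma polar_vec_inj : injective polar_vec.
Proof. by move=> x y e; apply: (scalerI delta_neq0); rewrite -!pole_vec_polar e. Qed.

Lemma pole_vec_inj : injective pole_vec.
Proof. by move=> x y e; apply: (scalerI delta_neq0); rewrite -!polar_vec_pole e. Qed.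

Lemma pole_vecZ k w : pole_vec (k *: w) = k *: pole_vec w.
Proof.
apply: polar_vec_inj; rewrite polar_vec_pole [polar_vec (k *: _)]polar_vecZ polar_vec_pole.
by rewrite !scalerA mulrC.
Qed.

Lemma pole_vec_comb u v s t : pole_vec (s *: u + t *: v) = s *: pole_vec u + t *: pole_vec v.
Proof.
apply: polar_vec_inj; rewrite polar_vec_pole polar_vecD.
rewrite [polar_vec (s *: _)]polar_vecZ [polar_vec (t *: _)]polar_vecZ !polar_vec_pole.
by rewrite scalerDr !scalerA mulrC [delta * t]mulrC.
Qed.

Lemma polar_vec0 : polar_vec 0 = 0.
Proof. by have := polar_vecZ 0 0; rewrite !scale0r. Qed.

Lemma pole_vec0 : pole_vec 0 = 0.
Proof. by have := pole_vec_comb 0 0 0 0; rewrite !scale0r !addr0. Qed.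

Lemma polar_vec_neq0 y : y != 0 -> polar_vec y != 0.
Proof.
by apply: contraNneq => e; apply/eqP/polar_vec_inj; rewrite e polar_vec0.
Qed.

Lemma pole_vec_neq0 w : w != 0 -> pole_vec w != 0.
Proof.
by apply: contraNneq => e; apply/eqP/pole_vec_inj; rewrite e pole_vec0.
Qed.

Definition polar P : line F := mkpt (polar_vec (val P)).
Definition pole (l : line F) : point F := mkpt (pole_vec (val l)).

Lemma polarK : cancel polar pole.
Proof.
move=> P; rewrite /pole; have [k hk ->] := val_mkpt_scale (polar_vec_neq0 (point_neq0 P)).
by rewrite pole_vecZ pole_vec_polar scalerA mkptZ ?mkpt_val ?point_neq0 ?mulf_neq0.
Qed.

Lemma poleK : cancel pole polar.
Proof.
move=> l; rewrite /polar; have [k hk ->] := val_mkpt_scale (pole_vec_neq0 (point_neq0 l)).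
by rewrite polar_vecZ polar_vec_pole scalerA mkptZ ?mkpt_val ?point_neq0 ?mulf_neq0.
Qed.

Lemma polar_inj : injective polar. Proof. exact: can_inj polarK. Qed.

Lemma incid_polar P Q : incid P (polar Q) <-> bform (val P) (val Q) = 0.
Proof. by rewrite incid_mkpt ?polar_vec_neq0 ?point_neq0 // dot_polar_vec. Qed.

Lemma incid_mkpt_polar v Q : v != 0 -> incid (mkpt v) (polar Q) <-> bform v (val Q) = 0.
Proof.
move=> hv; rewrite incid_polar; have [k hk ->] := val_mkpt_scale hv; rewrite bformZl.
by split => [/eqP|->]; rewrite ?mulr0 // mulf_eq0 (negPf hk) => /eqP.
Qed.

Lemma polarity_polar : polarity polar.
Proof.
split; first by exists pole; [exact: polarK | exact: poleK].
by move=> P Q; rewrite !incid_polar bformC.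
Qed.

(* Otherwise the polars of both points would be their join. *)
Lemma conjugate_conic_points_eq P Q : bform (val P) (val P) = 0 ->
  bform (val Q) (val Q) = 0 -> bform (val P) (val Q) = 0 -> P = Q.
Proof.
move=> hP hQ hPQ; case: (eqVneq P Q) => [// | /eqP nPQ]; exfalso.
have eP : polar P = join P Q by apply: join_eq => //; rewrite incid_polar // bformC.
have eQ : polar Q = join P Q by apply: join_eq => //; rewrite incid_polar // bformC.
by apply/nPQ/polar_inj; rewrite eP eQ.
Qed.

(* Coefficients of [cross z c] and [cross z d] (the lines [ZC], [ZD]) with
   respect to [cross z a] and [cross z b]. *)
Definition lam1 z := - xa z / xc z.
Definition mu1 z := - xb z / xc z.
Definition lam2 z := (xa d * xc z - xc d * xa z) / (delta * xc z).
Definition mu2 z := (xb d * xc z - xc d * xb z) / (delta * xc z).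

Lemma cross_c_comb z : xc z != 0 -> cross z c = lam1 z *: cross z a + mu1 z *: cross z b.
Proof.
move=> hz; apply: (scalerI hz); have := f_equal (cross z) (frame_decomp z).
rewrite crossZr crossvv scaler0 !crossDr !crossZr => /esym/eqP.
rewrite addrC addr_eq0 => /eqP ->.
by rewrite /lam1 /mu1; apply: row3P; rewrite !coordE; field.
Qed.

Lemma cross_d_comb z : xc z != 0 -> cross z d = lam2 z *: cross z a + mu2 z *: cross z b.
Proof.
move=> hz; have := f_equal (cross z) (frame_decomp d).
rewrite crossZr !crossDr !crossZr (cross_c_comb hz) => e.
apply: (scalerI delta_neq0); rewrite e /lam2 /mu2 /lam1 /mu1.
by apply: row3P; rewrite !coordE; field; rewrite hz delta_neq0.
Qed.

Lemma bform_pencil_coef z : xc z != 0 ->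
  bform z z = - 2 * delta * xc z ^+ 2 * (mu1 z * lam2 z + lam1 z * mu2 z).
Proof. by move=> hz; rewrite /bform /lam1 /lam2 /mu1 /mu2; field; rewrite hz delta_neq0. Qed.

Lemma conic_of_harmonic_coef z : xc z != 0 ->
  harmonic_coef (lam1 z) (mu1 z) (lam2 z) (mu2 z) -> bform z z = 0.
Proof. by move=> hz [_ e]; rewrite bform_pencil_coef // e addrC subrr mulr0. Qed.


Lemma frame_point_eq Z P k : delta *: val Z = k *: val P -> Z = P.
Proof.
move=> e; apply: (@point_eq_scale _ _ _ (k / delta)).
by apply: (scalerI delta_neq0); rewrite e scalerA mulrCA mulfV // mulr1.
Qed.

Section ConicPoint.
Variable Z : point F.
Local Notation z := (val Z).
Hypothesis conic_z : bform z z = 0.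

Lemma conic_xc_neq0 : Z <> A -> Z <> B -> xc z != 0.
Proof.
move=> nA nB; apply/eqP => xc0.
have : 2 * xc d * (2 * (xa z * xb z)) = - bform z z by rewrite /bform xc0; ring.
rewrite conic_z oppr0 => /eqP; rewrite !mulf_eq0 (negPf two_neq0) (negPf xc_d_neq0) /=.
case/orP => /eqP e.
- apply: nB; apply: (@frame_point_eq _ _ (xb z)).
  by rewrite frame_decomp e xc0 !scale0r add0r addr0.
- apply: nA; apply: (@frame_point_eq _ _ (xa z)).
  by rewrite frame_decomp e xc0 !scale0r !addr0.
Qed.
Hypothesis xc_z_neq0 : xc z != 0.

Lemma conic_xa_neq0 : Z <> C -> xa z != 0.
Proof.
move=> nC; apply/eqP => xa0.
have : 2 * xa d * (xb z * xc z) = 0 by rewrite -conic_z /bform xa0; ring.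
move/eqP; rewrite !mulf_eq0 (negPf two_neq0) (negPf xa_d_neq0) (negPf xc_z_neq0) !orbF /=.
move=> /eqP xb0; apply: nC; apply: (@frame_point_eq _ _ (xc z)).
by rewrite frame_decomp xa0 xb0 !scale0r !add0r.
Qed.

Lemma conic_mu2_neq0 : Z <> D -> xb d * xc z - xc d * xb z != 0.
Proof.
move=> nD; apply/eqP => /subr0_eq e1.
have xb_z_neq0 : xb z != 0.
  apply: contraNneq xc_z_neq0 => xb0; move: e1.
  by rewrite xb0 mulr0 => /eqP; rewrite mulf_eq0 (negPf xb_d_neq0).
have : 2 * xb z * (xa d * xc z - xc d * xa z) = 0.
  rewrite -conic_z /bform.
  rewrite (_ : xb d * (xa z * xc z + xc z * xa z) = 2 * xa z * (xb d * xc z)); last by ring.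
  by rewrite e1; ring.
move/eqP; rewrite !mulf_eq0 (negPf two_neq0) (negPf xb_z_neq0) /= => /eqP/subr0_eq e2.
apply: nD; apply: (@frame_point_eq _ _ (xc z / xc d * delta)).
rewrite -scalerA !frame_decomp !scalerDr !scalerA.
have -> : xa z = xc z / xc d * xa d by rewrite -[xa z](mulKf xc_d_neq0) -e2; field.
have -> : xb z = xc z / xc d * xb d by rewrite -[xb z](mulKf xc_d_neq0) -e1; field.
by congr (_ *: _ + _ *: _ + _ *: _); field.
Qed.
Lemma conic_harmonic_coef : Z <> C -> Z <> D ->
  harmonic_coef (lam1 z) (mu1 z) (lam2 z) (mu2 z).
Proof.
move=> nC nD; have xa_z_neq0 := conic_xa_neq0 nC; have mu2_num := conic_mu2_neq0 nD.
split; first by rewrite /lam1 /mu2; neq0.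
have hK : - 2 * delta * xc z ^+ 2 != 0 by neq0.
move: (bform_pencil_coef xc_z_neq0); rewrite conic_z => /esym/eqP.
by rewrite mulf_eq0 (negPf hK) addr_eq0 => /eqP.
Qed.

End ConicPoint.

Lemma harmonic_pencil_atE Z : Z <> A -> Z <> C -> Z <> B -> Z <> D ->
  harmonic_pencil (join Z A) (join Z B) (join Z C) (join Z D) <-> bform (val Z) (val Z) = 0.
Proof.
move=> nA nC nB nD; have [za zb] := (cross_points_neq0 nA, cross_points_neq0 nB).
have [zc zd] := (cross_points_neq0 nC, cross_points_neq0 nD).
split=> [hp | hz].
- have hi : indep (cross (val Z) a) (cross (val Z) b).
    by apply: indep_of_mkpt_neq za zb _; case: hp => /uniq4_neq12.
  have hzc : xc (val Z) != 0.
    by move: (cross_of_indep hi); rewrite cross_cross_common scaler_eq0 negb_or => /andP[].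
  apply: (conic_of_harmonic_coef hzc).
  exact: (harmonic_pencilE two_neq0 hi (cross_c_comb hzc) (cross_d_comb hzc) zc zd).1 hp.
- have hzc := conic_xc_neq0 hz nA nB.
  have hi : indep (cross (val Z) a) (cross (val Z) b).
    by apply: indep_of_cross; rewrite cross_cross_common scaler_eq0 negb_or hzc point_neq0.
  apply: (harmonic_pencilE two_neq0 hi (cross_c_comb hzc) (cross_d_comb hzc) zc zd).2.
  exact: conic_harmonic_coef.
Qed.

Lemma harmonic_curveE Z : harmonic_curve A C B D Z <-> bform (val Z) (val Z) = 0.
Proof.
split.
- case=> [->|[->|[->|[->|[nA nC nB nD hp]]]]];
    rewrite ?bform_vertex_a ?bform_vertex_b ?bform_vertex_c ?bform_vertex_d //.
  exact/(harmonic_pencil_atE nA nC nB nD).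
- move=> hz; rewrite /harmonic_curve.
  case: (eqVneq Z A) => [->|/eqP nA]; first by left.
  case: (eqVneq Z C) => [->|/eqP nC]; first by right; left.
  case: (eqVneq Z B) => [->|/eqP nB]; first by right; right; left.
  case: (eqVneq Z D) => [->|/eqP nD]; first by right; right; right; left.
  by right; right; right; right; split => //; exact/(harmonic_pencil_atE nA nC nB nD).
Qed.

Lemma harmonic_curve_self_conjugate P : harmonic_curve A C B D P <-> incid P (polar P).
Proof. by rewrite incid_polar harmonic_curveE. Qed.

Lemma harmonic_set_conic P M X Y : bform (val M) (val P) = 0 -> harmonic_set P M X Y ->
  bform (val X) (val X) = 0 -> bform (val Y) (val Y) = 0.
Proof.
move=> hMP [_ _ [l1 [m1 [l2 [m2 [-> [-> [hl hr]]]]]]]] hX.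
have hr' : m1 * l2 = - (l1 * m2) by rewrite -[m1 * l2](divfK hl) -hr mulN1r.
have hPM : bform (val P) (val M) = 0 by rewrite bformC.
have l1_neq0 : l1 != 0 by move: hl; rewrite mulf_eq0 negb_or => /andP[].
have expand k k' : bform (k *: val P + k' *: val M) (k *: val P + k' *: val M)
    = k ^+ 2 * bform (val P) (val P) + k' ^+ 2 * bform (val M) (val M).
  by rewrite !bformE hMP hPM; ring.
move: hX; rewrite !expand => hX.
apply: (mulfI (expf_neq0 2 l1_neq0)); rewrite mulr0.
have -> : l1 ^+ 2 * (l2 ^+ 2 * bform (val P) (val P) + m2 ^+ 2 * bform (val M) (val M))
    = l2 ^+ 2 * (l1 ^+ 2 * bform (val P) (val P)) + (l1 * m2) ^+ 2 * bform (val M) (val M).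
  by ring.
rewrite -[l1 * m2]opprK -hr' sqrrN.
have -> : l2 ^+ 2 * (l1 ^+ 2 * bform (val P) (val P)) + (m1 * l2) ^+ 2 * bform (val M) (val M)
    = l2 ^+ 2 * (l1 ^+ 2 * bform (val P) (val P) + m1 ^+ 2 * bform (val M) (val M)).
  by ring.
by rewrite hX mulr0.
Qed.

Section Reflection.
Variable P : point F.
Local Notation p := (val P).
Hypothesis P_off_curve : bform p p != 0.

Lemma harm_refl_conic X Y : harm_refl P (polar P) X Y ->
  bform (val X) (val X) = 0 -> bform (val Y) (val Y) = 0.
Proof.
case=> [[-> _] /eqP | [[_ ->] // | [nXP _ hs]]]; first by rewrite (negPf P_off_curve).
apply: harmonic_set_conic hs; rewrite -incid_polar.
apply: meet_incidr => e; move/negP: P_off_curve; apply; apply/eqP/incid_polar.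
by rewrite -e; exact: join_incidr.
Qed.

(* The reflection is the involution [y |-> 2 bform y p p - bform p p y];
   [m0] spans the meet of [YP] with the polar of [P]. *)
Lemma harm_refl_preimage Y : bform (val Y) (val Y) = 0 -> bform (val Y) p != 0 ->
  exists2 X, bform (val X) (val X) = 0 & harm_refl P (polar P) X Y.
Proof.
move=> hY; set y := val Y; set s := bform y p => s_neq0.
set t := bform p p; have t_neq0 : t != 0 := P_off_curve.
have nYP : Y <> P by move=> e; move: P_off_curve; rewrite /t -e hY eqxx.
set m0 := s *: p - t *: y; set x0 := s *: p + 1 *: m0.
have hi : indep p m0.
  apply: indep_of_cross; rewrite /m0 crossBr !crossZr crossvv scaler0 sub0r oppr_eq0.
  by rewrite scaler_eq0 negb_or t_neq0 (cross_points_neq0 (nesym nYP)).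
have [_ m0_neq0] := indep_neq0 hi.
have x0_neq0 : x0 != 0 by rewrite comb_neq0 // oner_eq0 orbT.
have ey : y = (s / t) *: p + (- t^-1) *: m0.
  by rewrite /m0; apply: row3P; rewrite !coordE; field.
have bform_x0p : bform x0 p = s * t by rewrite /x0 /m0 !bformE -/s -/t; ring.
set X := mkpt x0.
have nXm : ~ incid X (polar P).
  by rewrite incid_mkpt_polar // bform_x0p => /eqP; rewrite mulf_eq0 (negPf s_neq0) (negPf t_neq0).
have nXP : X <> P.
  have -> : P = mkpt (1 *: p + 0 *: m0) by rewrite scale1r scale0r addr0 mkpt_val.
  by apply: (mkpt_comb_neq hi); rewrite mulr0 mul1r sub0r oppr_eq0 oner_eq0.
have eM : mkpt m0 = meet (join X P) (polar P).
  apply: meet_eq; first by move=> e; apply: nXm; rewrite -e; exact: join_incidl.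
    rewrite mkpt_incid // /join; have [k _ ->] := val_mkpt_scale (cross_points_neq0 nXP).
    have [k' _ ->] := val_mkpt_scale x0_neq0.
    by rewrite crossZl !dotZr /x0 scale1r crossDl crossZl crossvv scaler0 add0r
      dot_crossl !mulr0.
  by rewrite incid_mkpt_polar // /m0 !bformE -/s -/t; ring.
exists X.
  have [k hk ->] := val_mkpt_scale x0_neq0.
  by rewrite bformZl bformZr /x0 /m0 scale1r !bformE (bformC p y) hY -/s -/t; ring.
right; right; split => //; rewrite -eM -(mkpt_val P) -(mkpt_val Y).
apply/(harmonic_setE two_neq0 hi (erefl x0) ey x0_neq0 (point_neq0 Y)).
split; first by rewrite mulf_neq0 ?oppr_eq0 ?invr_eq0.
by rewrite mul1r mulrN opprK.
Qed.
End Reflection.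

Lemma harm_refl_maps_onto P : ~ harmonic_curve A C B D P ->
  refl_maps_onto P (polar P) (harmonic_curve A C B D).
Proof.
move=> nP; have hP : bform (val P) (val P) != 0 by apply/eqP => /harmonic_curveE.
split=> [X Y hXY /harmonic_curveE hX | Y /harmonic_curveE hY].
  exact/harmonic_curveE/(harm_refl_conic hP hXY hX).
case: (eqVneq (bform (val Y) (val P)) 0) => hYP.
  by exists Y; split; [exact/harmonic_curveE | right; left; split => //; exact/incid_polar].
have [X hX hXY] := harm_refl_preimage hP hY hYP.
by exists X; split => //; exact/harmonic_curveE.
Qed.

Lemma tangent_line_polar V X Y W (t : line F) l1 m1 l2 m2 :
  let v := val V in indep (cross v (val X)) (cross v (val Y)) ->
  cross v (val W) = l1 *: cross v (val X) + m1 *: cross v (val Y) ->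
  polar_vec v = l2 *: cross v (val X) + m2 *: cross v (val Y) ->
  harmonic_coef l1 m1 l2 m2 ->
  tangent_line (join V X) (join V Y) (join V W) t -> t = polar V.
Proof.
move=> v hi eW ev H ht; have [vx_neq0 vy_neq0] := indep_neq0 hi.
have vw_neq0 : cross v (val W) != 0.
  have [l1_neq0 _ _ _] := harmonic_coef_neq0 H.
  by rewrite eW comb_neq0 // l1_neq0.
have nVX : V <> X by move=> e; move: vx_neq0; rewrite /v e crossvv eqxx.
have nVY : V <> Y by move=> e; move: vy_neq0; rewrite /v e crossvv eqxx.
(* The pencil is concurrent, and its centre lies on both [VX] and [VY], so it is [V]. *)
have Vt : incid V t.
  case: ht => huniq [O [o1 o2 _ o4]] _; case: (eqVneq O V) => [<- // | /eqP nOV].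
  have eX : join V X = join V O by apply: join_eq => //; [exact: nesym | exact: join_incidl].
  have eY : join V Y = join V O by apply: join_eq => //; [exact: nesym | exact: join_incidl].
  by case: (uniq4_neq12 huniq); rewrite eX eY.
have [s [s' et]] : exists s s', val t = s *: cross v (val X) + s' *: cross v (val Y).
  apply: dot_cross_eq0_span; first exact: cross_of_indep.
  by rewrite cross_cross_common dotZr dotC (proj1 (incidE _ _) Vt) mulr0.
move: ht; rewrite /tangent_line -(mkpt_val t).
move=> /(harmonic_pencilE two_neq0 hi eW et vw_neq0 (point_neq0 t)) Ht.
have [_ _ _ s'_neq0] := harmonic_coef_neq0 Ht; have [_ _ _ m2_neq0] := harmonic_coef_neq0 H.
have := harmonic_conjugate_unique (cross v (val X)) (cross v (val Y)) H Ht.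
rewrite -ev -et => ->.
by rewrite mkptZ ?polar_vec_neq0 ?point_neq0 ?mulf_neq0 ?invr_eq0.
Qed.

Lemma cross_frame_decompr x :
  delta *: cross x d = xa d *: cross x a + xb d *: cross x b + xc d *: cross x c.
Proof. by rewrite -crossZr frame_decomp !crossDr !crossZr. Qed.

Lemma cross_frame_decompl x :
  delta *: cross d x = xa d *: cross a x + xb d *: cross b x + xc d *: cross c x.
Proof. by rewrite -crossZl frame_decomp !crossDl !crossZl. Qed.

Lemma tangent_at_A t : tangent_line (join A C) (join A D) (join A B) t -> t = polar A.
Proof.
have k := cross_frame_decompr a; rewrite crossvv scaler0 add0r in k.
apply: (tangent_line_polar (l1 := - xc d / xb d) (m1 := delta / xb d)
  (l2 := delta * xc d) (m2 := delta ^+ 2)).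
- apply: indep_of_cross; rewrite cross_cross_common scaler_eq0 negb_or point_neq0 andbT.
  by rewrite (_ : det3 _ _ _ = - xb d) ?oppr_eq0 //; rewrite /xb; dot_ring.
- have -> : (delta / xb d) *: cross a d = (xb d)^-1 *: (delta *: cross a d).
    by rewrite scalerA mulrC.
  by rewrite k; apply: row3P; rewrite !coordE; field.
- rewrite (_ : delta ^+ 2 *: _ = delta *: (delta *: cross a d)); last by rewrite scalerA.
  by rewrite k /polar_vec !frameE -/delta (crossC c a); row3_ring.
- by split; [neq0 | field].
Qed.

Lemma tangent_at_C t : tangent_line (join C A) (join C B) (join C D) t -> t = polar C.
Proof.
have k := cross_frame_decompr c; rewrite crossvv scaler0 addr0 in k.
apply: (tangent_line_polar (l1 := xa d / delta) (m1 := xb d / delta)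
  (l2 := delta * xa d) (m2 := - (delta * xb d))).
- apply: indep_of_cross; rewrite cross_cross_common scaler_eq0 negb_or point_neq0 andbT.
  by rewrite (_ : det3 _ _ _ = delta) //; rewrite /delta /xa; dot_ring.
- by apply: (scalerI delta_neq0); rewrite k; apply: row3P; rewrite !coordE; field.
- by rewrite /polar_vec !frameE (crossC b c); row3_ring.
- by split; [neq0 | field].
Qed.

Lemma tangent_at_B t : tangent_line (join B C) (join B D) (join B A) t -> t = polar B.
Proof.
have k := cross_frame_decompr b; rewrite crossvv scaler0 addr0 in k.
apply: (tangent_line_polar (l1 := - xc d / xa d) (m1 := delta / xa d)
  (l2 := - (delta * xc d)) (m2 := - delta ^+ 2)).
- apply: indep_of_cross; rewrite cross_cross_common scaler_eq0 negb_or point_neq0 andbT.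
  by rewrite (_ : det3 _ _ _ = xa d) //; rewrite /xa; dot_ring.
- have -> : (delta / xa d) *: cross b d = (xa d)^-1 *: (delta *: cross b d).
    by rewrite scalerA mulrC.
  by rewrite k; apply: row3P; rewrite !coordE; field.
- rewrite (_ : - delta ^+ 2 *: _ = - delta *: (delta *: cross b d)); last by rewrite scalerA mulNr.
  by rewrite k /polar_vec !frameE -/delta; row3_ring.
- by split; [neq0 | field].
Qed.

Lemma tangent_at_D t : tangent_line (join D B) (join D A) (join D C) t -> t = polar D.
Proof.
have k := cross_frame_decompr d; rewrite crossvv scaler0 in k.
have kc : xc d *: cross d c = - (xa d *: cross d a + xb d *: cross d b).
  by apply/eqP; rewrite -addr_eq0 addrC -k eqxx.
apply: (tangent_line_polar (l1 := - xb d / xc d) (m1 := - xa d / xc d)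
  (l2 := delta * xb d) (m2 := - (delta * xa d))).
- apply: indep_of_cross; rewrite cross_cross_common scaler_eq0 negb_or point_neq0 andbT.
  by rewrite (_ : det3 _ _ _ = - xc d) ?oppr_eq0 //; rewrite /xc; dot_ring.
- by apply: (scalerI xc_d_neq0); rewrite kc; apply: row3P; rewrite !coordE; field.
- rewrite (_ : (delta * xb d) *: _ = xb d *: (delta *: cross d b)); last by rewrite scalerA mulrC.
  rewrite (_ : - (delta * xa d) *: _ = - xa d *: (delta *: cross d a)); last first.
    by rewrite scalerA mulNr mulrC.
  by rewrite !cross_frame_decompl !crossvv /polar_vec; row3_ring.
- by split; [neq0 | field].
Qed.

Lemma meet_polar Y X : Y <> X ->
  meet (polar Y) (polar X) = mkpt (pole_vec (cross (val Y) (val X))).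
Proof.
move=> nYX; have hr := pole_vec_neq0 (cross_points_neq0 nYX).
have on_polar Q : dot (val Q) (cross (val Y) (val X)) = 0 ->
    incid (mkpt (pole_vec (cross (val Y) (val X)))) (polar Q).
  move=> h; apply/(incid_mkpt_polar _ hr).
  by rewrite bformC -dot_polar_vec polar_vec_pole dotZr h mulr0.
symmetry; apply: meet_eq; first by move/polar_inj.
- by apply: on_polar; rewrite dot_crossl.
- by apply: on_polar; rewrite dot_crossr.
Qed.

Lemma indep_pole_vecE u v : indep (pole_vec u) (pole_vec v) <-> indep u v.
Proof.
split=> hi s t e; apply: hi; first by rewrite -pole_vec_comb e pole_vec0.
by apply: pole_vec_inj; rewrite pole_vec_comb e pole_vec0.
Qed.

Lemma harmonic_set_polar_meetsE Y : Y <> A -> Y <> C -> Y <> B -> Y <> D ->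
  xc (val Y) != 0 ->
  harmonic_set (meet (polar Y) (polar A)) (meet (polar Y) (polar B))
               (meet (polar Y) (polar C)) (meet (polar Y) (polar D))
  <-> harmonic_coef (lam1 (val Y)) (mu1 (val Y)) (lam2 (val Y)) (mu2 (val Y)).
Proof.
move=> nA nC nB nD hyc; rewrite !meet_polar //.
have hi : indep (cross (val Y) a) (cross (val Y) b).
  by apply: indep_of_cross; rewrite cross_cross_common scaler_eq0 negb_or hyc point_neq0.
apply: (harmonic_setE two_neq0 (proj2 (indep_pole_vecE _ _) hi));
  rewrite ?pole_vec_neq0 ?cross_points_neq0 // -pole_vec_comb.
- by rewrite -cross_c_comb.
- by rewrite -cross_d_comb.
Qed.

Lemma polar_harmonic_bundle Z : harmonic_curve A C B D Z ->
  harmonic_bundle (polar A) (polar C) (polar B) (polar D) (polar Z).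
Proof.
move=> hZ; rewrite /harmonic_bundle.
case: (eqVneq Z A) => [->|/eqP nA]; first by left.
case: (eqVneq Z C) => [->|/eqP nC]; first by right; left.
case: (eqVneq Z B) => [->|/eqP nB]; first by right; right; left.
case: (eqVneq Z D) => [->|/eqP nD]; first by right; right; right; left.
do 4!right; split; try by move/polar_inj.
have hz := proj1 (harmonic_curveE Z) hZ; have hzc := conic_xc_neq0 hz nA nB.
exact/(harmonic_set_polar_meetsE nA nC nB nD hzc)/conic_harmonic_coef.
Qed.

Lemma harmonic_bundle_polar_uniq Z (l : line F) : harmonic_curve A C B D Z ->
  harmonic_bundle (polar A) (polar C) (polar B) (polar D) l -> incid Z l -> l = polar Z.
Proof.
move=> /harmonic_curveE hZ; have on_vertex V : bform (val V) (val V) = 0 ->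
    incid Z (polar V) -> polar V = polar Z.
  by move=> hV /incid_polar hZV; rewrite (conjugate_conic_points_eq hV hZ) // bformC.
case=> [->|[->|[->|[->|[nA nC nB nD hs]]]]];
  [exact: on_vertex bform_vertex_a | exact: on_vertex bform_vertex_c
  | exact: on_vertex bform_vertex_b | exact: on_vertex bform_vertex_d | ].
rewrite -(poleK l) in hs nA nC nB nD *; set L := pole l in hs nA nC nB nD *.
have [nLA nLC nLB nLD] : [/\ L <> A, L <> C, L <> B & L <> D].
  by split=> e; [apply: nA | apply: nC | apply: nB | apply: nD]; rewrite e.
have hLc : xc (val L) != 0.
  have : indep (pole_vec (cross (val L) a)) (pole_vec (cross (val L) b)).
    apply: indep_of_mkpt_neq; rewrite ?pole_vec_neq0 ?cross_points_neq0 //.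
    by case: hs; rewrite !meet_polar // => /uniq4_neq12.
  move/indep_pole_vecE/cross_of_indep.
  by rewrite cross_cross_common scaler_eq0 negb_or => /andP[].
have /conic_of_harmonic_coef hL := (harmonic_set_polar_meetsE nLA nLC nLB nLD hLc).1 hs.
by move=> /incid_polar hZL; rewrite (conjugate_conic_points_eq (hL hLc) hZ) // bformC.
Qed.

End QuadrangleConic.

Lemma quadrangle_frame_neq0 (F : fieldType) (A C B D : point F) : quadrangle A C B D ->
  [/\ delta A C B != 0, xa C B (val D) != 0, xb A C (val D) != 0 & xc A B (val D) != 0].
Proof.
case=> /det3_neq0_of_noncollinear hACB /det3_neq0_of_noncollinear hACD
  /det3_neq0_of_noncollinear hABD /det3_neq0_of_noncollinear hCBD.
rewrite /delta /xa /xb /xc; split.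
- by rewrite (_ : det3 _ _ _ = - det3 (val A) (val C) (val B)) ?oppr_eq0 //; dot_ring.
- by rewrite (_ : det3 _ _ _ = - det3 (val C) (val B) (val D)) ?oppr_eq0 //; dot_ring.
- by rewrite (_ : det3 _ _ _ = - det3 (val A) (val C) (val D)) ?oppr_eq0 //; dot_ring.
- by rewrite (_ : det3 _ _ _ = det3 (val A) (val B) (val D)) //; dot_ring.
Qed.

Theorem mainTheorem6 (F : fieldType) (hchar : (2 : F) != 0)
    (A C B D : point F) (hQ : quadrangle A C B D) :
  exists pol : point F -> line F,
    [/\ polarity pol,
        (forall P : point F, harmonic_curve A C B D P <-> incid P (pol P)),
        (forall P : point F, ~ harmonic_curve A C B D P ->
            refl_maps_onto P (pol P) (harmonic_curve A C B D))
      & forall a c b d : line F,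
          tangent_line (join A C) (join A D) (join A B) a ->
          tangent_line (join C A) (join C B) (join C D) c ->
          tangent_line (join B C) (join B D) (join B A) b ->
          tangent_line (join D B) (join D A) (join D C) d ->
          forall Z : point F, harmonic_curve A C B D Z ->
            harmonic_bundle a c b d (pol Z) /\ incid Z (pol Z) /\
            (forall l : line F, harmonic_bundle a c b d l -> incid Z l ->
               l = pol Z)].
Proof.
have [hD ha hb hc] := quadrangle_frame_neq0 hQ.
exists (polar A C B D); split.
- by apply: polarity_polar.
- by move=> P; apply: harmonic_curve_self_conjugate.
- by move=> P; apply: harm_refl_maps_onto.
- move=> a c b d ta tc tb td Z hZ.
  rewrite (tangent_at_A hchar hD ha hb hc ta) (tangent_at_C hchar hD ha hb hc tc).
  rewrite (tangent_at_B hchar hD ha hb hc tb) (tangent_at_D hchar hD ha hb hc td).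
  split; [by apply: polar_harmonic_bundle | split].
  + by apply/harmonic_curve_self_conjugate.
  + by move=> l; apply: harmonic_bundle_polar_uniq.
Qed.
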